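(* Let $k,m$ be positive integers, $n=km$, $f:\mathbb{N}\to\mathbb{N}$ monotonically decreasing (nonincreasing), and $T_1,\dots,T_n\in\{H,L\}$ with $0\le H<L$. Let $\mathbf{x}$ be the decision sequence output by Algorithm 1 on input capacities $m_1=\dots=m_k=m$ and task sequence $T_1,\dots,T_n$. Then $\mathbf{x}$ assigns exactly $m$ tasks to each agent, and its total cost $\sum_{t=1}^n f(p_t)\,T_t$ is minimum among all size-$m$ $k$-allocation schemes of the $n$ tasks (equivalently, among all decision sequences assigning exactly $m$ tasks to each agent).
   Context: Positional allocation problem: given $n=km$ tasks with intrinsic costs $T_1,\dots,T_n$ and $k$ agents, a decision sequence $\mathbf{x}=(x_1,\dots,x_n)\in[k]^n$ assigns task $t$ to agent $x_t$, with each agent receiving exactly $m$ tasks; tasks assigned to the same agent are processed in increasing index order, and the position of task $t$ is $p_t=|\{s\le t: x_s=x_t\}|$. Its total cost is $\sum_{t=1}^n f(p_t)T_t$ (equivalently, $\sum_{r=1}^k\sum_{p=1}^m f(p)\,T_{r,p}$ where $T_{r,p}$ is the cost of the $p$-th task of agent $r$). Algorithm 1 (simulation-based threshold algorithm). Input: integers $0\le m_1\le\dots\le m_k$ and a sequence $T_1,\dots,T_n$ with $n=\sum_r m_r$. Set $q^{(1)}_r=m_r$ for all $r$. For $t=1,\dots,n$: set $x_t=\mathrm{TA}(q^{(t)}_1,\dots,q^{(t)}_k;\,T_t,T_{t+1},\dots,T_n)$ and $q^{(t+1)}_r=q^{(t)}_r-\mathbf{1}(x_t=r)$ for each $r$.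 Output $\mathbf{x}=(x_1,\dots,x_n)$. Subroutine $\mathrm{TA}(m_1,\dots,m_k;\,S_1,\dots,S_N)$ (ThresholdAllocation), with the convention $m_0:=0$: for $\gamma=k,k-1,\dots,1$: if $m_\gamma=m_{\gamma-1}$, go to the next $\gamma$; otherwise, for $h=\gamma,\gamma+1,\dots,k$: let $Z_L=\sum_{i=1}^{h-1}\min\{m_i,m_{\gamma-1}\}$ and $Z_H=\sum_{i=\gamma}^{h}(m_i-m_{\gamma-1})$; if $|\{i\in\{1,\dots,Z_L+Z_H\}: S_i>S_1\}|\ge Z_L$, return $\gamma$ (agent to which $S_1$ is assigned). *)

From HB Require Import structures.
From mathcomp Require Import all_boot all_order all_algebra.
Set Implicit Arguments. Unset Strict Implicit. Unset Printing Implicit Defensive.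
Import Order.TTheory GRing.Theory Num.Theory.

(* Agents are numbered 1..k; capacities ms = [:: m_1; ...; m_k] (1-indexed
   access, with the convention m_0 = 0). *)
Definition mget (ms : seq nat) (i : nat) : nat :=
  if i is i'.+1 then nth 0 ms i' else 0.

Section Alg.
Variable R : realDomainType.
Local Open Scope ring_scope.

Definition sget (S : seq R) (i : nat) : R := nth 0 S i.-1.

Definition cnt_greater (S : seq R) (z : nat) : nat :=
  count (fun i => sget S 1 < sget S i) (iota 1 z).

Definition ZL (ms : seq nat) (g h : nat) : nat :=
  (\sum_(1 <= i < h) minn (mget ms i) (mget ms g.-1))%N.

Definition ZH (ms : seq nat) (g h : nat) : nat :=
  (\sum_(g <= i < h.+1) (mget ms i - mget ms g.-1))%N.

Definition TA_test (ms : seq nat) (S : seq R) (g h : nat) : bool :=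
  (ZL ms g h <= cnt_greater S (ZL ms g h + ZH ms g h))%N.

Definition TA_gamma_ok (ms : seq nat) (S : seq R) (g : nat) : bool :=
  (mget ms g != mget ms g.-1) && has (TA_test ms S g) (iota g (size ms - g).+1).

(* ThresholdAllocation: first gamma, scanning k, k-1, ..., 1, that returns;
   0 (no agent) if none does. *)
Definition TA (ms : seq nat) (S : seq R) : nat :=
  head 0%N [seq g <- rev (iota 1 (size ms)) | TA_gamma_ok ms S g].

Definition decr (q : seq nat) (g : nat) : seq nat :=
  [seq (if i.+1 == g then (nth 0 q i).-1 else nth 0 q i) | i <- iota 0 (size q)].

(* Algorithm 1: at step t, the remaining sequence is T_t, ..., T_n. *)
Fixpoint alg1_aux (q : seq nat) (S : seq R) : seq nat :=
  match S with
  | [::] => [::]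
  | _ :: S' => let g := TA q S in g :: alg1_aux (decr q g) S'
  end.

Definition algorithm1 (ms : seq nat) (T : seq R) : seq nat := alg1_aux ms T.

(* position p_t of the task with 0-based index t: |{s <= t : x_s = x_t}| *)
Definition position (x : seq nat) (t : nat) : nat :=
  count (pred1 (nth 0 x t)) (take t.+1 x).

Definition total_cost (f : nat -> nat) (T : seq R) (x : seq nat) : R :=
  \sum_(0 <= t < size T) (f (position x t))%:R * nth 0 T t.

End Alg.

Definition valid_scheme (k m n : nat) (x : seq nat) : bool :=
  [&& size x == n, all (fun r => (1 <= r <= k)%N) x
    & all (fun r => count_mem r x == m) (iota 1 k)].

From HB Require Import structures.
From mathcomp Require Import all_boot all_order all_algebra.
From mathcomp Require Import zify.
Set Implicit Arguments. Unset Strict Implicit. Unset Printing Implicit Defensive.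

(* Put g l := f (m + 1 - l), a nondecreasing function of the level l of a task,
   i.e. of the remaining capacity of its agent just before it is assigned.  The
   multiset of levels is the same for every scheme, so when the tasks take only
   the values H < L, the cost of a scheme is a constant plus (L - H) times
   sum_c (g (c + 1) - g c) * #{L tasks at a level above c}.  It therefore
   suffices that Algorithm 1 minimises each of these counts.  For a threshold c
   they are bounded below by a potential: the maximum over prefixes of the
   remaining tasks of the number of L tasks minus the largest number of tasks
   of that prefix that can still be placed at a level at most c.  One step of
   any scheme lowers the potential by at most its contribution to the count,
   and a step of Algorithm 1 lowers it by at least that contribution; the
   latter is a case analysis driven by the threshold test of ThresholdAllocation. *)

Lemma leq_sum_nat m n (F G : nat -> nat) :
  (forall i, m <= i < n -> F i <= G i) ->
  \sum_(m <= i < n) F i <= \sum_(m <= i < n) G i.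
Proof.
move=> h; rewrite big_nat_cond [X in _ <= X]big_nat_cond.
by apply: leq_sum => i /andP[hi _]; apply: h.
Qed.

Lemma sum_nat_split m t n (w : nat -> nat) : m <= t <= n ->
  \sum_(m <= i < n) w i = \sum_(m <= i < t) w i + \sum_(t <= i < n) w i.
Proof. by case/andP=> h1 h2; rewrite (@big_cat_nat _ _ _ t). Qed.

Lemma sum_nat_indicator (w : nat -> nat) k r : r < k ->
  \sum_(0 <= i < k) ((i == r) * w i) = w r.
Proof.
move=> hr; rewrite (eq_bigr (fun i => if i == r then w i else 0)); last first.
  by move=> i _; case: (i == r); rewrite ?mul1n ?mul0n.
by rewrite -big_mkcond big_nat1_eq hr.
Qed.

Lemma sum_nat_eq_le1 k r : \sum_(0 <= i < k) ((i == r) : nat) <= 1.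
Proof.
rewrite (eq_bigr (fun i => if i == r then 1 else 0)); last by move=> i _; case: (i == r).
by rewrite -big_mkcond big_nat1_eq; case: ifP.
Qed.

Lemma sum_nat_ltn_cut m t n (w : nat -> nat) : m <= t <= n ->
  \sum_(m <= i < n) ((i < t) * w i) = \sum_(m <= i < t) w i.
Proof.
case/andP=> hmt htn; rewrite (@big_cat_nat _ _ _ t) //=.
have -> : \sum_(t <= i < n) ((i < t) * w i) = 0.
  by rewrite big_nat_cond big1 // => i /andP[/andP[hi _] _]; rewrite ltnNge hi.
by rewrite addn0; apply: eq_big_nat => i /andP[_ ->]; rewrite mul1n.
Qed.

Lemma leq_sum_nat_term (w : nat -> nat) n j : j < n -> w j <= \sum_(0 <= i < n) w i.
Proof.
move=> hj; rewrite -(sum_nat_indicator w hj); apply: leq_sum_nat => i _.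
by case: (i == j); rewrite ?mul1n ?mul0n.
Qed.

Lemma nth_decr q g i : nth 0 (decr q g) i = nth 0 q i - (i.+1 == g).
Proof.
rewrite /decr; case: (ltnP i (size q)) => Hi.
  rewrite (nth_map 0) ?size_iota // nth_iota // add0n.
  by case: (i.+1 == g); rewrite ?subn0 ?subn1.
by rewrite !nth_default ?size_map ?size_iota.
Qed.

Lemma nth_decrS q r i : nth 0 (decr q r.+1) i = nth 0 q i - (i == r).
Proof. by rewrite nth_decr eqSS. Qed.

Lemma size_decr q g : size (decr q g) = size q.
Proof. by rewrite /decr size_map size_iota. Qed.

Lemma sum_decr k q r : r < k -> 0 < nth 0 q r ->
  \sum_(0 <= i < k) nth 0 (decr q r.+1) i + 1 = \sum_(0 <= i < k) nth 0 q i.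
Proof.
move=> hr hq; rewrite -(sum_nat_indicator (fun _ => 1) hr) -big_split /=.
by apply: eq_big_nat => i _; rewrite nth_decrS; case: (i =P r) => [->|] /=; lia.
Qed.

Definition sorted_upto k (q : seq nat) :=
  forall i j, i <= j < k -> nth 0 q i <= nth 0 q j.

Lemma nth_le_mget k q i g : sorted_upto k q -> i < g <= k -> nth 0 q i <= mget q g.
Proof. by move=> hs; case: g => [//|g] hig /=; apply: hs; lia. Qed.

Lemma mget_le_nth k q g : sorted_upto k q -> g < k -> mget q g <= nth 0 q g.
Proof. by move=> hs; case: g => [//|g] hg /=; apply: hs; lia. Qed.

Lemma sorted_upto_decr k q r : sorted_upto k q -> r < k -> mget q r < nth 0 q r ->
  sorted_upto k (decr q r.+1).
Proof.
move=> hs hr hw i j /andP[hij hjk]; rewrite !nth_decrS.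
have hqij : nth 0 q i <= nth 0 q j by apply: hs; rewrite hij hjk.
case: (j =P r) => [ej|_]; last by case: (i == r) => /=; lia.
subst j; case: (i =P r) => [->|ni] //=.
have : nth 0 q i <= mget q r by apply: (nth_le_mget hs); lia.
lia.
Qed.

Definition zl (q : seq nat) v t := \sum_(0 <= i < t.-1) minn (nth 0 q i) v.
Definition zh (q : seq nat) v p t := \sum_(p <= i < t) (nth 0 q i - v).

Section LowCapacity.
Variables (k c : nat).

Definition high_slots (q : seq nat) i := nth 0 q i - c.
Definition low_slots (q : seq nat) i := minn (nth 0 q i) c.
Lemma high_add_low_slots q i : high_slots q i + low_slots q i = nth 0 q i.
Proof. by rewrite /high_slots /low_slots; lia. Qed.

Definition sum_high q (P : pred nat) := \sum_(0 <= i < k) (P i * high_slots q i).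
Definition sum_low q (P : pred nat) := \sum_(0 <= i < k) (P i * low_slots q i).
Definition low_fill q s P := minn (s - sum_high q P) (sum_low q P).
Definition pred_of_ordset (J : {set 'I_k}) : pred nat :=
  fun i => if insub i is Some x then x \in J else false.

(* An agent with remaining capacity q_i hands out levels q_i, q_i - 1, ..., 1,
   so it first fills q_i - c levels above c and then min(q_i, c) levels at most
   c. Hence among s tasks, at most low_capacity q s can get a level at most c. *)
Definition low_capacity q s := \max_(J : {set 'I_k}) low_fill q s (pred_of_ordset J).

Lemma low_fill_le_capacity q s P : low_fill q s P <= low_capacity q s.
Proof.
pose J := [set x : 'I_k | P x].
have -> : low_fill q s P = low_fill q s (pred_of_ordset J).
  have eJ w : \sum_(0 <= i < k) (P i * w i) = \sum_(0 <= i < k) (pred_of_ordset J i * w i).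
    by apply: eq_big_nat => i /andP[_ hi]; rewrite /pred_of_ordset insubT /= inE.
  by rewrite /low_fill /sum_high /sum_low !eJ.
exact: (leq_bigmax J).
Qed.

Lemma low_capacity_attained q s : exists P, low_capacity q s = low_fill q s P.
Proof.
exists (pred_of_ordset [arg max_(J > set0) low_fill q s (pred_of_ordset J)]).
by rewrite /low_capacity (bigmax_eq_arg set0).
Qed.

Lemma low_capacity0 q : low_capacity q 0 = 0.
Proof.
apply/eqP; rewrite -leqn0; apply/bigmax_leqP => J _.
by rewrite /low_fill sub0n min0n.
Qed.

Lemma low_fill_prefix_le_capacity q s t : t <= k ->
  minn (s - \sum_(0 <= i < t) high_slots q i) (\sum_(0 <= i < t) low_slots q i)
  <= low_capacity q s.
Proof.
move=> ht; have := low_fill_le_capacity q s (fun i => i < t).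
by rewrite /low_fill /sum_high /sum_low !sum_nat_ltn_cut ?ht.
Qed.

Lemma low_capacity_succ_le q r s :
  low_capacity q s.+1 <= (low_capacity (decr q r.+1) s).+1.
Proof.
have [P ->] := low_capacity_attained q s.+1.
set qd := decr q r.+1.
have hA : sum_high qd P <= sum_high q P.
  by apply: leq_sum_nat => i _; rewrite /high_slots nth_decrS; apply: leq_mul => //; lia.
have hB : sum_low q P <= sum_low qd P + 1.
  apply: (leq_trans _ (leq_add (leqnn _) (sum_nat_eq_le1 k r))).
  rewrite -big_split; apply: leq_sum_nat => i _; rewrite /low_slots nth_decrS.
  by case: (P i); case: (i == r) => /=; lia.
by have := low_fill_le_capacity qd s P; rewrite /low_fill; lia.
Qed.

Lemma low_capacity_decr_low q r s : r < k -> 0 < nth 0 q r -> nth 0 q r <= c ->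
  (low_capacity (decr q r.+1) s).+1 <= low_capacity q s.+1.
Proof.
move=> hr hq hc.
have [P ->] := low_capacity_attained (decr q r.+1) s.
set qd := decr q r.+1; pose Pr i := (i == r) || P i.
have hA : sum_high q Pr <= sum_high qd P.
  apply: leq_sum_nat => i _; rewrite /high_slots /Pr nth_decrS.
  by case: (i =P r) => [->|_] /=; [lia | rewrite subn0].
have hB : sum_low qd P + 1 <= sum_low q Pr.
  rewrite -[X in _ + X <= _](sum_nat_indicator (fun _ => 1) hr) -big_split.
  apply: leq_sum_nat => i _; rewrite /low_slots /Pr nth_decrS.
  by case: (i =P r) => [->|_] /=; [case: (P r) => /=; lia | rewrite subn0 addn0].
have h1 : 1 <= low_capacity q s.+1.
  apply: leq_trans (low_fill_le_capacity q s.+1 (pred1 r)); rewrite /low_fill.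
  have -> : sum_high q (pred1 r) = 0.
    rewrite /sum_high big_nat_cond big1 // => i _ /=; rewrite /high_slots.
    by case: (i =P r) => [->|] /=; lia.
  rewrite /sum_low (sum_nat_indicator (low_slots q)) // /low_slots; lia.
by have := low_fill_le_capacity q s.+1 Pr; rewrite /low_fill; lia.
Qed.

Lemma low_capacity_decr_le q r s :
  low_capacity (decr q r.+1) s <= low_capacity q s.+1.
Proof.
have [P ->] := low_capacity_attained (decr q r.+1) s.
set qd := decr q r.+1.
have hA : sum_high q P <= sum_high qd P + 1.
  apply: (leq_trans _ (leq_add (leqnn _) (sum_nat_eq_le1 k r))).
  rewrite -big_split; apply: leq_sum_nat => i _; rewrite /high_slots nth_decrS.
  by case: (P i); case: (i == r) => /=; lia.
have hB : sum_low qd P <= sum_low q P.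
  by apply: leq_sum_nat => i _; rewrite /low_slots nth_decrS; apply: leq_mul => //; lia.
by have := low_fill_le_capacity q s.+1 P; rewrite /low_fill; lia.
Qed.

Section HighAgent.
Variables (q : seq nat) (g0 : nat).
Hypotheses (g0k : g0 < k) (hc : c < nth 0 q g0)
  (hmin : forall i, g0 <= i < k -> nth 0 q g0 <= nth 0 q i).

Lemma low_fill_succ_le_decr_mem s (P : pred nat) : P g0 ->
  low_fill q s.+1 P <= low_capacity (decr q g0.+1) s.
Proof.
move=> hPg; set qd := decr q g0.+1.
have hA : sum_high qd P + 1 <= sum_high q P.
  rewrite -[X in _ + X <= _](sum_nat_indicator (fun _ => 1) g0k) -big_split.
  apply: leq_sum_nat => x _; rewrite /high_slots nth_decrS.
  by case: (x =P g0) => [->|_] /=; [rewrite hPg /=; lia | rewrite subn0 addn0].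
have hB : sum_low q P <= sum_low qd P.
  apply: leq_sum_nat => x _; rewrite /low_slots nth_decrS.
  by case: (x =P g0) => [->|_] /=; [apply: leq_mul => //; lia | rewrite subn0].
by have := low_fill_le_capacity qd s P; rewrite /low_fill; lia.
Qed.

(* Exchange argument: if P uses an agent i >= g0 but not g0, swap i for g0. *)
Lemma low_fill_succ_le_decr s (P : pred nat) :
  (exists2 i, g0 <= i < k & P i) ->
  low_fill q s.+1 P <= low_capacity (decr q g0.+1) s.
Proof.
case=> i /andP[hgi hik] hPi; case hPg: (P g0); first exact: low_fill_succ_le_decr_mem.
have ne : i != g0 by apply/eqP => e; move: hPi; rewrite e hPg.
set qd := decr q g0.+1; pose P' x := (x == g0) || (P x && (x != i)).
have hmi : nth 0 q g0 <= nth 0 q i by apply: hmin; rewrite hgi hik.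
have hA : sum_high qd P' + high_slots q i + 1 <= sum_high q P + high_slots q g0.
  rewrite -(sum_nat_indicator (high_slots q) hik) -(sum_nat_indicator (fun _ => 1) g0k).
  rewrite -(sum_nat_indicator (high_slots q) g0k) -!big_split.
  apply: leq_sum_nat => x _; rewrite /P' /high_slots nth_decrS.
  case: (x =P g0) => [->|nx] /=; first by rewrite eq_sym (negbTE ne) hPg /=; lia.
  by case: (x =P i) => [->|nxi] /=; [rewrite hPi /=; lia | rewrite subn0 andbT; lia].
have hB : sum_low q P + low_slots q g0 <= sum_low qd P' + low_slots q i.
  rewrite -(sum_nat_indicator (low_slots q) hik) -(sum_nat_indicator (low_slots q) g0k).
  rewrite -!big_split; apply: leq_sum_nat => x _; rewrite /P' /low_slots nth_decrS.
  case: (x =P g0) => [->|nx] /=; first by rewrite eq_sym (negbTE ne) hPg /=; lia.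
  by case: (x =P i) => [->|nxi] /=; [rewrite hPi /=; lia | rewrite subn0 andbT; lia].
have hwa : high_slots q g0 <= high_slots q i by rewrite /high_slots; lia.
have hwb : low_slots q i = low_slots q g0 by rewrite /low_slots; lia.
by have := low_fill_le_capacity qd s P'; rewrite /low_fill; lia.
Qed.

End HighAgent.

Lemma sum_high_ge_prefix q p t (P : pred nat) : sorted_upto k q ->
  (forall i, i < p -> nth 0 q i <= c) -> p < t <= k ->
  t - p <= \sum_(p <= i < k) (P i : nat) ->
  \sum_(0 <= i < t) high_slots q i <= sum_high q P.
Proof.
move=> hs hlow /andP[hpt htk] hj.
have hpk : p <= k by lia.
set th := high_slots q t.-1.
have eAt : \sum_(0 <= i < t) high_slots q i = \sum_(p <= i < k) ((i < t) * high_slots q i).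
  rewrite sum_nat_ltn_cut ?(ltnW hpt) // (@big_cat_nat _ _ _ p) ?(ltnW hpt) //=.
  by rewrite big_nat_cond big1 // => i /andP[/andP[_ /hlow hi] _]; apply/eqP; rewrite subn_eq0.
have etp : t - p = \sum_(p <= i < k) ((i < t) * 1).
  by rewrite sum_nat_ltn_cut ?(ltnW hpt) // sum_nat_const_nat muln1.
have hsplit : \sum_(p <= i < k) (P i * high_slots q i) <= sum_high q P.
  by rewrite /sum_high [X in _ <= X](@big_cat_nat _ _ _ p) //= leq_addl.
(* th is a threshold: high slots below t are at most th, those from t on at least th. *)
have hexch : \sum_(0 <= i < t) high_slots q i + th * \sum_(p <= i < k) (P i : nat)
    <= \sum_(p <= i < k) (P i * high_slots q i) + th * (t - p).
  rewrite eAt etp !big_distrr -!big_split /=; apply: leq_sum_nat => i /andP[h1 h2].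
  case: (ltnP i t) => hit /=.
    have : nth 0 q i <= nth 0 q t.-1 by apply: hs; apply/andP; split; lia.
    by rewrite /th /high_slots; case: (P i); lia.
  have : nth 0 q t.-1 <= nth 0 q i by apply: hs; apply/andP; split; lia.
  by rewrite /th /high_slots; case: (P i); lia.
have : th * (t - p) <= th * \sum_(p <= i < k) (P i : nat) by apply: leq_mul.
lia.
Qed.

Lemma low_capacity_le_split q t s : sorted_upto k q -> 0 < t <= k -> c < nth 0 q t.-1 ->
  low_capacity q s <= maxn (\sum_(0 <= i < t.-1) low_slots q i)
                          (s - \sum_(0 <= i < t) high_slots q i).
Proof.
move=> hs /andP[t0 tk] hct.
have [p hcp hpmin] := ex_minnP (ex_intro (fun i => c < nth 0 q i) _ hct).
have hlow i : i < p -> nth 0 q i <= c.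
  by move=> hi; rewrite leqNgt; apply/negP => /hpmin; rewrite leqNgt hi.
have hpt : p <= t.-1 by apply: hpmin.
have hpk : p <= k by lia.
have hhigh i : p <= i < k -> c < nth 0 q i.
  by move=> hi; apply: leq_trans hcp (hs _ _ _); rewrite hi.
have [P ->] := low_capacity_attained q s.
set j := \sum_(p <= i < k) (P i : nat).
have hB : sum_low q P <= \sum_(0 <= i < p) nth 0 q i + c * j.
  rewrite /sum_low (@sum_nat_split 0 p k) ?hpk // /j big_distrr /=; apply: leq_add.
    by apply: leq_sum_nat => i /andP[_ hi]; rewrite /low_slots; case: (P i); lia.
  by apply: leq_sum_nat => i _; rewrite /low_slots; case: (P i); lia.
have hlows : \sum_(0 <= i < p) nth 0 q i + c * (t.-1 - p)
    <= \sum_(0 <= i < t.-1) low_slots q i.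
  rewrite (@sum_nat_split 0 p t.-1) ?hpt // mulnC -sum_nat_const_nat; apply: leq_add.
    by apply: leq_sum_nat => i /andP[_ hi]; rewrite /low_slots; have := hlow i hi; lia.
  by apply: leq_sum_nat => i /andP[h1 h2]; rewrite /low_slots; have := hhigh i; lia.
(* Either P has at most t.-1 - p agents above c, which bounds its low slots, or
   it has at least t - p of them, whose high slots outweigh those of the first t. *)
rewrite /low_fill; case: (leqP j (t.-1 - p)) => hj.
  have : c * j <= c * (t.-1 - p) by apply: leq_mul.
  by clear -hB hlows; lia.
have hA : \sum_(0 <= i < t) high_slots q i <= sum_high q P.
  by apply: sum_high_ge_prefix hlow _ _ => //; lia.
by clear -hA; lia.
Qed.

End LowCapacity.

Section Potential.
Variables (T : eqType) (Lv : T) (k c : nat).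

Definition prefix_count (S : seq T) s := count (pred1 Lv) (take s S).

(* Any assignment must place at least prefix_count S s - low_capacity q s of
   the first s tasks equal to Lv at a level above c. *)
Definition potential q (S : seq T) :=
  \max_(s < (size S).+1) (prefix_count S s - low_capacity k c q s).

Lemma prefix_count_cons x S s : prefix_count (x :: S) s.+1 = (x == Lv) + prefix_count S s.
Proof. by []. Qed.

Lemma prefix_count_le S s : prefix_count S s <= s.
Proof. by rewrite (leq_trans (count_size _ _)) // size_take; case: ltnP => // /ltnW. Qed.

Lemma prefix_count_mono S s t : s <= t -> prefix_count S s <= prefix_count S t.
Proof. by move=> h; rewrite /prefix_count -(subnKC h) takeD count_cat leq_addr. Qed.

Lemma prefix_count_lipschitz S s t : s <= t ->
  prefix_count S t <= prefix_count S s + (t - s).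
Proof.
move=> h; rewrite /prefix_count -{1}(subnKC h) takeD count_cat leq_add2l.
by rewrite (leq_trans (count_size _ _)) // size_take; case: ltnP => // /ltnW.
Qed.

Lemma potential_ge q S s : s <= size S ->
  prefix_count S s - low_capacity k c q s <= potential q S.
Proof. by move=> h; rewrite /potential (bigmax_sup (Ordinal (n:=(size S).+1) h)). Qed.

Lemma potential_le q S b :
  (forall s, s <= size S -> prefix_count S s - low_capacity k c q s <= b) ->
  potential q S <= b.
Proof. by move=> h; apply/bigmax_leqP => i _; apply: h; rewrite -ltnS. Qed.

Lemma potential_attained q S : exists2 s, s <= size S &
  potential q S = prefix_count S s - low_capacity k c q s.
Proof.
have [[s hs] /= ->] : exists s : 'I_(size S).+1,
    potential q S = prefix_count S s - low_capacity k c q s.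
  exists [arg max_(i > ord0) (prefix_count S i - low_capacity k c q i)].
  by rewrite /potential (bigmax_eq_arg ord0).
by exists s.
Qed.

Lemma potential_nil q : potential q [::] = 0.
Proof.
apply/eqP; rewrite -leqn0; apply: potential_le => s /=.
by rewrite leqn0 => /eqP ->; rewrite /prefix_count take0.
Qed.

Lemma potential_cons_le q r x S : r < k -> 0 < nth 0 q r ->
  potential q (x :: S) <= ((x == Lv) && (c < nth 0 q r)) + potential (decr q r.+1) S.
Proof.
move=> hr hq; apply: potential_le => -[_|s] /=; first by rewrite /prefix_count take0.
rewrite ltnS prefix_count_cons => hs; have := potential_ge (decr q r.+1) hs.
case: (leqP (nth 0 q r) c) => hc.
  by have := low_capacity_decr_low s hr hq hc; case: (x == Lv) => /=; lia.
by have := low_capacity_decr_le k c q r s; case: (x == Lv) => /=; lia.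
Qed.

Lemma potential_decr_le_cons q r S : potential (decr q r.+1) S <= potential q (Lv :: S).
Proof.
apply: potential_le => s hs; have := low_capacity_succ_le k c q r s.
have := potential_ge q (hs : s.+1 <= size (Lv :: S)).
rewrite prefix_count_cons eqxx; lia.
Qed.

Lemma potential_decr_lt_cons q r S :
  (forall s, low_capacity k c q s.+1 <= low_capacity k c (decr q r.+1) s) ->
  potential (decr q r.+1) S < potential q (Lv :: S).
Proof.
move=> hF; have [s hs ->] := potential_attained (decr q r.+1) S.
have := potential_ge q (hs : s.+1 <= size (Lv :: S)).
have := potential_ge q (isT : 1 <= size (Lv :: S)).
rewrite !prefix_count_cons eqxx /prefix_count take0 /=.
by have := hF 0; have := hF s; rewrite low_capacity0; lia.
Qed.

Lemma potential_decr_le_high q g0 x S : g0 < k -> c < nth 0 q g0 ->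
  (forall i, g0 <= i < k -> nth 0 q g0 <= nth 0 q i) -> x != Lv ->
  \sum_(0 <= i < g0) high_slots c q i <= potential q (x :: S) ->
  potential (decr q g0.+1) S <= potential q (x :: S).
Proof.
move=> g0k hc hmin hx hAs; apply: potential_le => s hs.
have hV := potential_ge q (hs : s.+1 <= size (x :: S)).
rewrite prefix_count_cons (negbTE hx) add0n in hV.
have [P hP] := low_capacity_attained k c q s.+1.
case: (boolP [exists i : 'I_k, (g0 <= i) && P i]) => [/existsP[i /andP[h1 h2]]|hn].
  have hi : g0 <= i < k by rewrite h1 ltn_ord.
  by have := low_fill_succ_le_decr g0k hc hmin s (ex_intro2 _ _ (nat_of_ord i) hi h2); rewrite -hP; lia.
have hno i : g0 <= i < k -> P i = false.
  case/andP=> h1 h2; apply/negP => hp; move/existsP: hn; apply.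
  by exists (Ordinal h2); rewrite /= h1 hp.
have eA : sum_high k c (decr q g0.+1) P = sum_high k c q P.
  apply: eq_big_nat => i /andP[_ hi]; rewrite /high_slots nth_decrS.
  by case: (i =P g0) => [->|]; [rewrite hno ?leqnn | rewrite subn0].
have eB : sum_low k c (decr q g0.+1) P = sum_low k c q P.
  apply: eq_big_nat => i /andP[_ hi]; rewrite /low_slots nth_decrS.
  by case: (i =P g0) => [->|]; [rewrite hno ?leqnn | rewrite subn0].
have hA : sum_high k c q P <= \sum_(0 <= i < g0) high_slots c q i.
  rewrite /sum_high (@big_cat_nat _ _ _ g0) //=; last exact: ltnW.
  have -> : \sum_(g0 <= i < k) P i * high_slots c q i = 0.
    by rewrite big_nat_cond big1 // => i /andP[hi _]; rewrite hno.
  by rewrite addn0; apply: leq_sum_nat => i _; case: (P i); rewrite ?mul1n ?mul0n.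
have := low_fill_le_capacity k c (decr q g0.+1) s P.
rewrite /low_fill eA eB; rewrite hP /low_fill in hV.
have := prefix_count_le S s; clear -hV hA hAs; lia.
Qed.

End Potential.

Section Thresholds.
Variables (T : eqType) (Lv : T) (k c : nat).
Local Notation prefix_count := (prefix_count Lv).
Local Notation potential := (potential Lv k c).

Lemma sum_high_le_potential q (S : seq T) g0 t : sorted_upto k q -> g0 < t <= k ->
  c < mget q g0 ->
  zl q (mget q g0) t <= prefix_count S (zl q (mget q g0) t + zh q (mget q g0) g0 t) ->
  \sum_(0 <= i < k) nth 0 q i = size S ->
  \sum_(0 <= i < g0) high_slots c q i <= potential q S.
Proof.
move=> hs /andP[hgt htk] hcv hpass hsum.
set v := mget q g0 in hcv hpass *.
set ZL := zl q v t in hpass *; set ZH := zh q v g0 t in hpass *.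
have hqv i : i < g0 -> nth 0 q i <= v by move=> hi; apply: (nth_le_mget hs); lia.
have hct : c < nth 0 q t.-1.
  by apply: leq_trans hcv (leq_trans (mget_le_nth hs _) (hs _ _ _)); lia.
have eZH : ZH = \sum_(0 <= i < t) (nth 0 q i - v).
  rewrite (@sum_nat_split 0 g0 t) ?(ltnW hgt) // big_nat_cond big1 ?add0n //.
  by move=> i /andP[/andP[_ /hqv hi] _]; apply/eqP; rewrite subn_eq0.
have hW : ZL + ZH <= size S.
  rewrite -hsum eZH /ZL /zl -(@sum_nat_ltn_cut 0 t.-1 t) ?leq_pred // -big_split /=.
  rewrite (@sum_nat_split 0 t k) ?htk //; apply: leq_trans (leq_addr _ _).
  by apply: leq_sum_nat => i _; case: (i < t.-1) => /=; lia.
have hA : \sum_(0 <= i < g0) high_slots c q i + ZH <= \sum_(0 <= i < t) high_slots c q i.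
  rewrite /ZH /zh [X in _ <= X](@sum_nat_split 0 g0 t) ?(ltnW hgt) // leq_add2l.
  by apply: leq_sum_nat => i _; rewrite /high_slots; lia.
have hB : \sum_(0 <= i < t.-1) low_slots c q i + \sum_(0 <= i < g0) high_slots c q i <= ZL.
  rewrite -(@sum_nat_ltn_cut 0 g0 t.-1) /=; last lia.
  rewrite -big_split; apply: leq_sum_nat => i _; rewrite /low_slots /high_slots.
  by case: (ltnP i g0) => hi /=; [have := hqv i hi | ]; lia.
have hF := @low_capacity_le_split k c q t (ZL + ZH) hs (ltac:(lia)) hct.
have hV := @potential_ge _ Lv k c q _ _ hW.
move: hpass hF hV hA hB; clear; lia.
Qed.

Lemma prefix_count_lt_low_capacity q (S : seq T) p :
  0 < p <= k -> (forall i, i < p -> nth 0 q i <= c) ->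
  \sum_(0 <= i < k) nth 0 q i = size S -> (forall s, 0 < s -> prefix_count S s < s) ->
  (forall t, p < t <= k ->
     prefix_count S (zl q (mget q p) t + zh q (mget q p) p t) < zl q (mget q p) t) ->
  forall s, 0 < s <= size S -> prefix_count S s < low_capacity k c q s.
Proof.
move=> /andP[p0 pk] hlow hsum hfirst hfail s /andP[s0 sS].
set v := mget q p in hfail.
have hv : v <= c by rewrite /v; case: (p) p0 hlow => // p' _ /= -> //.
pose Z t := zl q v t + zh q v p t.
pose Q t := (p <= t <= k) && ((t == p) || (Z t < s)).
have exQ : exists t, Q t by exists p; rewrite /Q leqnn pk eqxx.
have ubQ t : Q t -> t <= k by case/andP=> /andP[].
case: (ex_maxnP exQ ubQ) => t /andP[/andP[hpt htk] hor] hmax.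
have hF := low_fill_prefix_le_capacity c q s htk.
have hap : \sum_(0 <= i < p) high_slots c q i = 0.
  rewrite big_nat_cond big1 // => i /andP[/andP[_ hi] _].
  by apply/eqP; rewrite subn_eq0 hlow.
have h1 : prefix_count S s < s - \sum_(0 <= i < t) high_slots c q i.
  case: (eqVneq t p) => [->|ne]; first by rewrite hap subn0 hfirst.
  move: hor; rewrite (negbTE ne) /= => hZ.
  have hA : \sum_(0 <= i < t) high_slots c q i <= zh q v p t.
    rewrite (@sum_nat_split 0 p t) ?hpt // hap add0n.
    by apply: leq_sum_nat => i _; rewrite /high_slots; lia.
  have := hfail t; rewrite ltn_neqAle eq_sym ne hpt htk => /(_ isT).
  have := prefix_count_lipschitz Lv S (ltnW hZ); rewrite /Z in hZ *; move: hZ hA; clear; lia.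
have h2 : prefix_count S s < \sum_(0 <= i < t) low_slots c q i.
  case: (ltnP t k) => htk'.
    have : ~~ Q t.+1 by apply/negP => /hmax; rewrite ltnn.
    rewrite /Q (leq_trans hpt) // htk' /= eqn_leq (leqNgt t.+1 p) ltnS hpt /= -leqNgt => hs.
    have hZ : zl q v t.+1 <= \sum_(0 <= i < t) low_slots c q i.
      by apply: leq_sum_nat => i _; rewrite /low_slots; lia.
    have := hfail t.+1; rewrite ltnS hpt htk' => /(_ isT).
    by have := prefix_count_mono Lv S hs; rewrite /Z; lia.
  have ht : t = k by apply/eqP; rewrite eqn_leq htk htk'.
  have : \sum_(0 <= i < t) high_slots c q i + \sum_(0 <= i < t) low_slots c q i = size S.
    by rewrite -hsum ht -big_split; apply: eq_big_nat => i _; apply: high_add_low_slots.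
  lia.
lia.
Qed.

End Thresholds.

Lemma head_filter_rev_iotaP (P : pred nat) n : has P (iota 1 n) ->
  let g := head 0 [seq x <- rev (iota 1 n) | P x] in
  [/\ 0 < g <= n, P g & forall x, g < x <= n -> ~~ P x].
Proof.
elim: n => [//|n IH].
rewrite -[n.+1]addn1 iotaD add1n rev_cat /= has_cat /= orbF addn1.
case hP: (P n.+1) => /=.
  by move=> _; split; rewrite ?leqnn // => x /andP[h1 h2]; move: (leq_trans h1 h2); rewrite ltnn.
rewrite orbF => /IH [/andP[g0 gn] Pg hmax]; split => //; first by rewrite g0 (leq_trans gn).
move=> x /andP[h1 h2]; case: (ltngtP x n.+1) => hx.
- by apply: hmax; rewrite h1 -ltnS.
- by move: h2; rewrite leqNgt hx.
- by rewrite hx hP.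
Qed.

Lemma ZL_zl ms g h : ZL ms g h = zl ms (mget ms g.-1) h.
Proof. by rewrite /ZL big_add1. Qed.

Lemma ZH_zh ms g0 h : ZH ms g0.+1 h = zh ms (mget ms g0) g0 h.
Proof. by rewrite /ZH big_add1. Qed.

Lemma count_nth_iota0 (T : Type) (x0 : T) (p : pred T) (S : seq T) z : ~~ p x0 ->
  count (fun j => p (nth x0 S j)) (iota 0 z) = count p (take z S).
Proof.
move=> p0; elim: S z => [|y S IH] z.
  rewrite /= (eq_count (a2 := pred0)) ?count_pred0 // => j /=.
  by rewrite nth_nil (negbTE p0).
case: z => [//|z]; rewrite /= -IH -[in iota 1 z](addn0 1) iotaDl count_map.
by congr (_ + _); apply: eq_count.
Qed.

Import Order.TTheory GRing.Theory Num.Theory.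

Section TwoValued.
Variables (R : realDomainType) (H L : R).
Hypotheses (H0 : (0 <= H)%R) (HL : (H < L)%R).

Definition two_valued (S : seq R) := all (fun s => (s == H) || (s == L)) S.

Lemma cnt_greater_take (S : seq R) z : (0 <= sget S 1)%R ->
  cnt_greater S z = count (fun y => sget S 1 < y)%R (take z S).
Proof.
move=> a0; rewrite -(@count_nth_iota0 _ 0%R) /cnt_greater; last by rewrite -leNgt.
rewrite [X in count _ X](_ : _ = map (addn 1) (iota 0 z)) ?count_map; last by rewrite -iotaDl.
by apply: eq_count => j /=; rewrite /sget add1n.
Qed.

Lemma cnt_greater_L (S : seq R) z : two_valued (L :: S) -> cnt_greater (L :: S) z = 0.
Proof.
move=> hS; rewrite cnt_greater_take /sget /=; last exact/ltW/(le_lt_trans H0).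
rewrite (eq_in_count (a2 := pred0)) ?count_pred0 // => x /mem_take hx /=.
move/allP: hS => /(_ _ hx) /orP[/eqP->|/eqP->]; last by rewrite ltxx.
by rewrite ltNge ltW.
Qed.

Lemma cnt_greater_H (S : seq R) z : two_valued (H :: S) ->
  cnt_greater (H :: S) z = prefix_count L (H :: S) z.
Proof.
move=> hS; rewrite cnt_greater_take /sget //=.
apply: eq_in_count => x /mem_take hx /=.
move/allP: hS => /(_ _ hx) /orP[/eqP->|/eqP->]; last by rewrite HL eqxx.
by rewrite ltxx (lt_eqF HL).
Qed.

End TwoValued.

Section ThresholdAllocation.
Variables (R : realDomainType) (k : nat) (q : seq nat).
Hypotheses (hsz : size q = k) (hs : sorted_upto k q).

Lemma TA_spec (S : seq R) : 0 < \sum_(0 <= i < k) nth 0 q i ->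
  let g := TA q S in
  [/\ 0 < g <= k, TA_gamma_ok q S g & forall x, g < x <= k -> ~~ TA_gamma_ok q S x].
Proof.
move=> hpos; rewrite /TA hsz; apply: head_filter_rev_iotaP.
have exP : exists i, (i < k) && (0 < nth 0 q i).
  case: (boolP [exists i : 'I_k, 0 < nth 0 q i]) => [/existsP[i hi]|hn].
    by exists i; rewrite ltn_ord hi.
  move: hpos; rewrite big_nat_cond big1 // => i /andP[/andP[_ hi] _].
  by apply/eqP; rewrite eqn0Ngt; apply: contra hn => hp; apply/existsP; exists (Ordinal hi).
case: (ex_minnP exP) => i0 /andP[hi0 hp0] hmin.
have hm0 : mget q i0 = 0.
  case: i0 hi0 hp0 hmin => [//|i1] hi0 hp0 hmin /=.
  by apply/eqP; rewrite eqn0Ngt; apply/negP => hp; have := hmin i1; rewrite hp; lia.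
apply/hasP; exists i0.+1; first by rewrite mem_iota /= add1n ltnS hi0.
rewrite /TA_gamma_ok hm0 -lt0n hp0 /=; apply/orP; left.
by rewrite /TA_test ZL_zl /= hm0 /zl big_nat_cond big1 // => i _; rewrite minn0.
Qed.

Lemma TA_gamma_ok_mget_lt (S : seq R) g0 : g0 < k -> TA_gamma_ok q S g0.+1 ->
  mget q g0 < nth 0 q g0.
Proof.
by move=> g0k /andP[hne _]; rewrite ltn_neqAle eq_sym hne (mget_le_nth hs).
Qed.

Lemma TA_succ (S : seq R) : 0 < \sum_(0 <= i < k) nth 0 q i ->
  exists g0, [/\ TA q S = g0.+1, g0 < k & mget q g0 < nth 0 q g0].
Proof.
move=> hpos; have [/andP[g0p gk] okg _] := TA_spec S hpos.
move: g0p gk okg; case: (TA q S) => [//|g0] _ g0k okg.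
by exists g0; split => //; apply: TA_gamma_ok_mget_lt okg.
Qed.

End ThresholdAllocation.

Section Step.
Variables (R : realDomainType) (H L : R).
Hypotheses (H0 : (0 <= H)%R) (HL : (H < L)%R).
Variables (k c : nat) (q : seq nat).
Hypotheses (hsz : size q = k) (hs : sorted_upto k q).
Local Notation potential := (potential L k c).

Lemma potential_step_L (S : seq R) g0 : two_valued H L (L :: S) -> g0 < k ->
  TA_gamma_ok q (L :: S) g0.+1 ->
  (c < nth 0 q g0) + potential (decr q g0.+1) S <= potential q (L :: S).
Proof.
move=> hHL g0k /andP[_ okh].
have hmin i : g0 <= i < k -> nth 0 q g0 <= nth 0 q i by move=> hi; apply: hs.
(* The test for an L task only passes when Z_L = 0, i.e. below g0 all capacities are 0. *)
have hz : mget q g0 = 0.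
  case/hasP: okh => h; rewrite mem_iota => /andP[hh _].
  rewrite /TA_test (cnt_greater_L H0 HL) // leqn0 ZL_zl /= => /eqP hZ.
  move: hh hZ; case: (g0) => [//|g1] hh hZ /=.
  have hg1 : g1 < h.-1 by lia.
  have := leq_sum_nat_term (fun i => minn (nth 0 q i) (nth 0 q g1)) hg1.
  by rewrite /zl in hZ; rewrite hZ minnn leqn0 => /eqP.
case: (leqP (nth 0 q g0) c) => hc /=; first exact: potential_decr_le_cons.
apply: potential_decr_lt_cons => s.
have [P ->] := low_capacity_attained k c q s.+1.
case: (boolP [exists i : 'I_k, (g0 <= i) && P i]) => [/existsP[i /andP[h1 h2]]|hn].
  have hi : g0 <= i < k by rewrite h1 ltn_ord.
  by apply: (low_fill_succ_le_decr g0k hc hmin); exists i.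
rewrite /low_fill; suff -> : sum_low k c q P = 0 by rewrite minn0.
rewrite /sum_low big_nat_cond big1 // => i /andP[/andP[_ hi] _].
case: (ltnP i g0) => hig.
  by have := @nth_le_mget k q i g0 hs; rewrite hz hig (ltnW g0k) /low_slots; lia.
case hPi: (P i) => //=; move/existsP: hn; case.
by exists (Ordinal hi); rewrite /= hig hPi.
Qed.

Lemma potential_step_H_low (S : seq R) g0 : two_valued H L (H :: S) ->
  \sum_(0 <= i < k) nth 0 q i = size (H :: S) -> g0 < k -> nth 0 q g0 <= c ->
  (forall x, g0.+1 < x <= k -> ~~ TA_gamma_ok q (H :: S) x) ->
  potential (decr q g0.+1) S <= potential q (H :: S).
Proof.
move=> hHL hsum g0k hc hmax.
set p := find (fun y => c < y) q.
have hpk : p <= k by rewrite -hsz find_size.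
have hlow i : i < p -> nth 0 q i <= c.
  by move=> hi; rewrite leqNgt; have /= -> := before_find 0 hi.
have hcp : p < k -> c < nth 0 q p.
  by rewrite -hsz -has_find => /(nth_find 0).
clearbody p.
have hgp : g0 < p.
  rewrite ltnNge; apply/negP => hpg.
  have : nth 0 q p <= nth 0 q g0 by apply: hs; rewrite hpg g0k.
  by have := hcp (leq_ltn_trans hpg g0k); lia.
have hfirst s : 0 < s -> prefix_count L (H :: S) s < s.
  by case: s => [//|s] _; rewrite prefix_count_cons (lt_eqF HL) ltnS prefix_count_le.
(* The first agent with capacity above c lies above the chosen one, so its test failed. *)
have hfail t : p < t <= k -> prefix_count L (H :: S) (zl q (mget q p) t + zh q (mget q p) p t)
    < zl q (mget q p) t.
  case/andP=> hpt htk; have := hmax p.+1; rewrite ltnS hgp (leq_trans hpt htk).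
  rewrite /TA_gamma_ok negb_and negbK => /(_ isT).
  have hmp : mget q p < nth 0 q p.
    move: hgp hlow; case: (p) (hcp (leq_trans hpt htk)) => [//|p1] hc1 _ hl /=.
    by have := hl p1 (ltnSn _); lia.
  rewrite eq_sym (ltn_eqF hmp) orFb => /seq.hasPn /(_ t); rewrite mem_iota hsz.
  rewrite /TA_test -ltnNge (cnt_greater_H H0 HL) // ZL_zl ZH_zh => h; apply: h; lia.
have hp : 0 < p <= k by apply/andP; split; lia.
have hlt := prefix_count_lt_low_capacity hp hlow hsum hfirst hfail.
apply: potential_le => s hs'; have := hlt s.+1 hs'.
by rewrite prefix_count_cons (lt_eqF HL); have := low_capacity_succ_le k c q g0 s; lia.
Qed.

Lemma potential_step_H_high (S : seq R) g0 : two_valued H L (H :: S) ->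
  \sum_(0 <= i < k) nth 0 q i = size (H :: S) -> g0 < k -> c < nth 0 q g0 ->
  TA_gamma_ok q (H :: S) g0.+1 ->
  potential (decr q g0.+1) S <= potential q (H :: S).
Proof.
move=> hHL hsum g0k hc /andP[_ okh].
have hmin i : g0 <= i < k -> nth 0 q g0 <= nth 0 q i by move=> hi; apply: hs.
apply: (potential_decr_le_high g0k hc hmin (negbT (lt_eqF HL))).
case: (leqP (mget q g0) c) => hv.
  rewrite big_nat_cond big1 // => i /andP[/andP[_ hi] _]; apply/eqP; rewrite subn_eq0.
  by apply: leq_trans _ hv; apply: (nth_le_mget hs); rewrite hi ltnW.
case/hasP: okh => t; rewrite mem_iota hsz => /andP[ht1 ht2].
rewrite /TA_test (cnt_greater_H H0 HL) // ZL_zl ZH_zh /= => hpass.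
by apply: (sum_high_le_potential hs _ hv hpass hsum); lia.
Qed.

Lemma potential_step x (S : seq R) : two_valued H L (x :: S) ->
  \sum_(0 <= i < k) nth 0 q i = size (x :: S) ->
  ((x == L) && (c < nth 0 q (TA q (x :: S)).-1)) + potential (decr q (TA q (x :: S))) S
  <= potential q (x :: S).
Proof.
move=> hHL hsum; have := TA_spec hsz (x :: S); rewrite hsum => /(_ isT).
case: (TA q (x :: S)) => [[]//|g0 [/andP[_ g0k] okg hmax]] /=.
case/andP: (hHL) => /orP[] /eqP hx _; subst x; last by rewrite eqxx; exact: potential_step_L.
rewrite (lt_eqF HL) add0n; case: (leqP (nth 0 q g0) c) => hc.
  exact: potential_step_H_low.
exact: potential_step_H_high.
Qed.

End Step.

(* The level of a task is the remaining capacity of its agent just before the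
   task is assigned; from initial capacity m it equals m + 1 - position. *)
Fixpoint levels (q : seq nat) (y : seq nat) : seq nat :=
  if y is r :: y' then nth 0 q r.-1 :: levels (decr q r) y' else [::].

Definition fills k q (y : seq nat) :=
  (forall r, r \in y -> 0 < r <= k) /\ (forall i, i < k -> count_mem i.+1 y = nth 0 q i).

Lemma fills_cons k q r y : fills k q (r :: y) ->
  [/\ r.-1 < k, 0 < nth 0 q r.-1, r = r.-1.+1 & fills k (decr q r) y].
Proof.
case=> h1 h2; have /andP[r0 rk] := h1 r (mem_head _ _).
have er : r = r.-1.+1 by rewrite prednK.
split => //; first lia.
  by rewrite -h2 /= -?er ?eqxx //; lia.
split=> [r' hr'|i hi]; first by apply: h1; rewrite in_cons hr' orbT.
by rewrite nth_decr -h2 //= eq_sym; lia.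
Qed.

Lemma algorithm_fills (R : realDomainType) k q (S : seq R) : size q = k -> sorted_upto k q ->
  \sum_(0 <= i < k) nth 0 q i = size S ->
  size (alg1_aux q S) = size S /\ fills k q (alg1_aux q S).
Proof.
elim: S q => [|x S IH] q hsz hs hsum.
  split; split => // i hi /=.
  by have := leq_sum_nat_term (fun i => nth 0 q i) hi; rewrite hsum /=; lia.
have hpos : 0 < \sum_(0 <= i < k) nth 0 q i by rewrite hsum.
have [g0 [eg g0k hw]] := TA_succ hsz hs (x :: S) hpos.
have hp : 0 < nth 0 q g0 by apply: leq_ltn_trans hw.
have hsum' : \sum_(0 <= i < k) nth 0 (decr q g0.+1) i = size S.
  by have := sum_decr g0k hp; rewrite hsum /=; lia.
have [hsz' [hv1 hv2]] := IH _ (etrans (size_decr _ _) hsz) (sorted_upto_decr hs g0k hw) hsum'.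
rewrite /= eg; split; first by rewrite hsz'.
split=> [r|i hi /=]; first by rewrite in_cons => /orP[/eqP->|/hv1] //; rewrite ltnS.
by rewrite hv2 // nth_decrS eqSS; case: (i =P g0) => [->|/eqP ne]; rewrite ?eqxx; lia.
Qed.

Section Bounds.
Variables (R : realDomainType) (H L : R).
Hypotheses (H0 : (0 <= H)%R) (HL : (H < L)%R).
Variable k : nat.

Definition high_L_count c q (S : seq R) y :=
  \sum_(0 <= t < size S) ((nth 0%R S t == L) && (c < nth 0 (levels q y) t)).

Lemma high_L_count_cons c q x S r y :
  high_L_count c q (x :: S) (r :: y) =
  ((x == L) && (c < nth 0 q r.-1)) + high_L_count c (decr q r) S y.
Proof. by rewrite /high_L_count /= big_nat_recl. Qed.

Lemma potential_le_high_L_count c q S y : size y = size S -> fills k q y ->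
  potential L k c q S <= high_L_count c q S y.
Proof.
elim: S q y => [|x S IH] q [|r y] //=; first by rewrite potential_nil.
case=> hsz /fills_cons [hr hq er hf]; rewrite high_L_count_cons.
have := potential_cons_le L c x S hr hq; rewrite -er => /leq_trans; apply.
by rewrite leq_add2l; apply: IH.
Qed.

Lemma high_L_count_algorithm_le_potential c q S : size q = k -> sorted_upto k q ->
  \sum_(0 <= i < k) nth 0 q i = size S -> two_valued H L S ->
  high_L_count c q S (alg1_aux q S) <= potential L k c q S.
Proof.
elim: S q => [|x S IH] q hsz hs hsum hHL; first by rewrite /high_L_count big_geq.
have hpos : 0 < \sum_(0 <= i < k) nth 0 q i by rewrite hsum.
have [g0 [eg g0k hw]] := TA_succ hsz hs (x :: S) hpos.
rewrite /= high_L_count_cons; apply: leq_trans _ (potential_step H0 HL c hsz hs hHL hsum).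
rewrite leq_add2l eg; apply: IH.
- by rewrite size_decr hsz.
- exact: sorted_upto_decr.
- by have := sum_decr g0k (leq_ltn_trans (leq0n _) hw); rewrite hsum /=; lia.
- by case/andP: hHL.
Qed.

End Bounds.

Lemma nth_levels q y t : (forall r, r \in y -> 0 < r) -> t < size y ->
  nth 0 (levels q y) t = nth 0 q (nth 0 y t).-1 - count_mem (nth 0 y t) (take t y).
Proof.
elim: y q t => [|r y IH] q [|t] hpos //= ht; first by rewrite subn0.
rewrite IH //; last by move=> r' hr'; apply: hpos; rewrite in_cons hr' orbT.
have hy : 0 < nth 0 y t by apply: hpos; rewrite in_cons mem_nth ?orbT.
by rewrite nth_decr prednK // subnDA eq_sym.
Qed.

Definition level_sum (g : nat -> nat) k q := \sum_(0 <= i < k) \sum_(0 <= l < nth 0 q i) g l.+1.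

Lemma sum_levels_fills g k q y : fills k q y ->
  \sum_(0 <= t < size y) g (nth 0 (levels q y) t) = level_sum g k q.
Proof.
elim: y q => [|r y IH] q hf.
  rewrite big_geq // /level_sum big_nat_cond big1 // => i /andP[/andP[_ hi] _].
  by case: hf => _ /(_ i hi) /= <-; rewrite big_geq.
have [hr hp er hf'] := fills_cons hf.
rewrite /= big_nat_recl //= IH // /level_sum -(sum_nat_indicator (fun i => g (nth 0 q i)) hr).
rewrite -big_split /=; apply: eq_big_nat => i _; rewrite er nth_decrS.
case: (i =P r.-1) => [->|_]; last by rewrite subn0.
by rewrite mul1n -{3}(prednK hp) big_nat_recr //= addnC subn1 prednK.
Qed.

Section Layers.
Variable g : nat -> nat.
Hypothesis g_mono : {homo g : a b / a <= b}.

Lemma telescope_layers l M : l <= M ->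
  g l = g 0 + \sum_(0 <= c < M) ((c < l) * (g c.+1 - g c)).
Proof.
move=> hl; rewrite sum_nat_ltn_cut ?hl // telescope_sumn //.
by rewrite subnKC // g_mono.
Qed.

(* Layer-cake decomposition: the layer above level c is counted by high_L_count c. *)
Lemma sum_L_levels (R : realDomainType) (L : R) (T : seq R) q y M :
  (forall t, t < size T -> nth 0 (levels q y) t <= M) ->
  \sum_(0 <= t < size T) ((nth 0%R T t == L) * g (nth 0 (levels q y) t))
  = g 0 * \sum_(0 <= t < size T) (nth 0%R T t == L)
    + \sum_(0 <= c < M) (g c.+1 - g c) * high_L_count L c q T y.
Proof.
move=> hM; rewrite (eq_big_nat _ _ (F2 := fun t => g 0 * (nth 0%R T t == L) +
    \sum_(0 <= c < M) (g c.+1 - g c) * ((nth 0%R T t == L) && (c < nth 0 (levels q y) t)))).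
  rewrite big_split /= big_distrr /= exchange_big_nat /=; congr (_ + _).
  by apply: eq_big_nat => c _; rewrite /high_L_count big_distrr.
move=> t /andP[_ ht]; rewrite (telescope_layers (hM t ht)) mulnDr mulnC; congr (_ + _).
rewrite big_distrr /=; apply: eq_big_nat => c _.
by case: (nth 0%R T t == L); case: (c < _); rewrite /= ?muln0 ?muln1 ?mul0n ?mul1n.
Qed.

End Layers.

Lemma cost_two_valued (R : realDomainType) (H L : R) (T : seq R) (w : nat -> nat) :
  (H < L)%R -> two_valued H L T ->
  (\sum_(0 <= t < size T) (w t)%:R * nth 0%R T t)%R =
  ((\sum_(0 <= t < size T) w t)%:R * H
   + (\sum_(0 <= t < size T) ((nth 0%R T t == L) * w t))%:R * (L - H))%R.
Proof.
move=> HL hT; rewrite !natr_sum !mulr_suml -big_split /=.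
apply: eq_big_nat => t /andP[_ ht].
move/allP: hT => /(_ _ (mem_nth 0%R ht)) /orP[/eqP->|/eqP->].
  by rewrite (lt_eqF HL) /= mul0n mul0r addr0.
by rewrite eqxx mul1n mulrBr addrC subrK.
Qed.

Lemma nseq_caps k m : [/\ size (nseq k m) = k, sorted_upto k (nseq k m)
  & \sum_(0 <= i < k) nth 0 (nseq k m) i = k * m].
Proof.
split; first by rewrite size_nseq.
  by move=> i j /andP[hij hj]; rewrite !nth_nseq hj (leq_ltn_trans hij hj).
rewrite (eq_big_nat _ _ (F2 := fun=> m)); first by rewrite sum_nat_const_nat subn0.
by move=> i /andP[_ hi]; rewrite nth_nseq hi.
Qed.

Lemma valid_scheme_fills k m z : valid_scheme k m (k * m) z ->
  size z = k * m /\ fills k (nseq k m) z.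
Proof.
case/and3P=> /eqP hz1 /allP hz2 /allP hz3; split=> //; split=> [r /hz2 //|i hi].
by rewrite nth_nseq ifT //; apply/eqP/hz3; rewrite mem_iota add1n ltnS.
Qed.

Lemma fills_valid_scheme k m z : size z = k * m -> fills k (nseq k m) z ->
  valid_scheme k m (k * m) z.
Proof.
move=> hsz [h1 h2]; apply/and3P; split; first by rewrite hsz.
  by apply/allP => r /h1.
apply/allP => r; rewrite mem_iota => /andP[r1 r2].
have hr : r.-1 < k by lia.
by rewrite -(prednK r1) h2 // nth_nseq hr.
Qed.

Lemma position_nth z t : t < size z ->
  position z t = (count_mem (nth 0 z t) (take t z)).+1.
Proof. by move=> ht; rewrite /position (take_nth 0 ht) -cats1 count_cat /= eqxx addn1. Qed.

Lemma position_add_level k m z t : fills k (nseq k m) z -> t < size z ->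
  position z t + nth 0 (levels (nseq k m) z) t = m.+1.
Proof.
case=> hz1 hz2 ht; rewrite position_nth //; set a := nth 0 z t.
have /andP[a0 ak] : 0 < a <= k by apply: hz1; rewrite mem_nth.
have ha1 : a.-1 < k by lia.
have : count_mem a (take t.+1 z) <= m.
  have <- : nth 0 (nseq k m) a.-1 = m by rewrite nth_nseq ha1.
  rewrite -hz2 // prednK //.
  by rewrite -{2}(cat_take_drop t.+1 z) count_cat leq_addr.
rewrite nth_levels -/a ?nth_nseq ?ha1 //; last by move=> r /hz1 /andP[].
by rewrite (take_nth 0 ht) -cats1 count_cat /= eqxx addn1; lia.
Qed.

Lemma nth_levels_le k m z t : fills k (nseq k m) z -> t < size z ->
  nth 0 (levels (nseq k m) z) t <= m.
Proof. by move=> hz ht; have := position_add_level hz ht; rewrite position_nth //; lia. Qed.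

Lemma total_cost_levels (R : realDomainType) k m f (T : seq R) z :
  fills k (nseq k m) z -> size z = size T ->
  total_cost f T z =
  (\sum_(0 <= t < size T) (f (m.+1 - nth 0 (levels (nseq k m) z) t)%N)%:R * nth 0 T t)%R.
Proof.
move=> hz hsz; apply: eq_big_nat => t /andP[_ ht].
rewrite -hsz in ht; have := position_add_level hz ht.
by move=> hp; congr ((f _)%:R * _)%R; lia.
Qed.

Lemma total_cost_le_of_layers (R : realDomainType) (H L : R) k m f (T : seq R) x y :
  (forall a b, a <= b -> f b <= f a) -> (H < L)%R -> two_valued H L T ->
  size x = size T -> fills k (nseq k m) x -> size y = size T -> fills k (nseq k m) y ->
  (forall c, high_L_count L c (nseq k m) T x <= high_L_count L c (nseq k m) T y) ->
  (total_cost f T x <= total_cost f T y)%R.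
Proof.
move=> hf HL hT hszx hfx hszy hfy hc.
pose g l := f (m.+1 - l).
have g_mono : {homo g : a b / a <= b} by move=> a b hab; apply: hf; lia.
have hlev z : fills k (nseq k m) z -> size z = size T ->
    forall t, t < size T -> nth 0 (levels (nseq k m) z) t <= m.
  by move=> hz hsz t; rewrite -hsz; apply: nth_levels_le.
rewrite (total_cost_levels _ hfx hszx) (total_cost_levels _ hfy hszy).
rewrite !(cost_two_valued _ HL hT) -{1}hszx -{2}hszy.
rewrite (sum_levels_fills g hfx) (sum_levels_fills g hfy) lerD2l.
apply: ler_wpM2r; first by rewrite subr_ge0 ltW.
rewrite ler_nat (sum_L_levels g_mono L (hlev _ hfx hszx)).
rewrite (sum_L_levels g_mono L (hlev _ hfy hszy)) leq_add2l.
by apply: leq_sum_nat => c _; apply: leq_mul.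
Qed.

Unset Implicit Arguments.
Local Open Scope ring_scope.

Theorem theorem2 (R : realDomainType) (k m : nat) (f : nat -> nat)
    (H L : R) (T : seq R) :
  (0 < k)%N -> (0 < m)%N ->
  (forall a b : nat, (a <= b)%N -> (f b <= f a)%N) ->
  0 <= H -> H < L ->
  size T = (k * m)%N ->
  all (fun s => (s == H) || (s == L)) T ->
  let x := algorithm1 (nseq k m) T in
  valid_scheme k m (k * m) x /\
  (forall y : seq nat, valid_scheme k m (k * m) y ->
     total_cost f T x <= total_cost f T y).
Proof.
move=> _ _ hf H0 HL hT hHL x.
have [hsz0 hs0 hsum0] := nseq_caps k m; rewrite -hT in hsum0.
have [hszx hfx] := algorithm_fills hsz0 hs0 hsum0.
split; first by apply: fills_valid_scheme => //; rewrite -hT; exact: hszx.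
move=> y /valid_scheme_fills [hszy hfy]; rewrite -hT in hszy.
apply: (total_cost_le_of_layers hf HL hHL hszx hfx hszy hfy) => c.
apply: leq_trans (high_L_count_algorithm_le_potential H0 HL c hsz0 hs0 hsum0 hHL) _.
exact: potential_le_high_L_count hszy hfy.
Qed.
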